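(* Let $\mathcal{G}^s$ be an SCG, consider the effect $P(y_t\mid \text{do}(x^1_{t-\gamma_1}),\dots,\text{do}(x^n_{t-\gamma_n}))$, let $F\in\mathcal{V}^s$ and fix an intervention $X^i_{t-\gamma_i}$. The following are equivalent: 1. There exists $t_f\in\mathbb{Z}$ such that $F_{t_f}$ is both $X^i_{t-\gamma_i}$-$\mathcal{NC}$-accessible and $Y_t$-$\mathcal{NC}$-accessible. 2. $t_{\mathcal{NC}}(F)\le t^{\mathcal{NC}}_{X^i_{t-\gamma_i}}(F)$ and $t_{\mathcal{NC}}(F)\le t^{\mathcal{NC}}_{Y_t}(F)$.
   Context: Let $\mathcal{V}$ be a finite set of time series, $\mathcal{V}^f=\{X_s: X\in\mathcal{V},s\in\mathbb{Z}\}$. An FTCG is a DAG on $\mathcal{V}^f$ whose edges $X_s\to Z_{s'}$ satisfy $s\le s'$. The SCG reduced from an FTCG $\mathcal{G}^f$ is $\mathcal{G}^s=(\mathcal{V}^s,\mathcal{E}^s)$, $\mathcal{V}^s=\mathcal{V}$, with $X\to Z$ iff $\mathcal{G}^f$ has an edge $X_{s-\gamma}\to Z_s$ with $\gamma\ge0$. An SCG is a graph reduced from some FTCG; $\mathcal{C}(\mathcal{G}^s)$ is the class of candidate FTCGs (those from which $\mathcal{G}^s$ is reduced). Descendants are via directed paths (a vertex is its own descendant). A path from set $\mathbf{A}$ to $\mathbf{B}$ is proper if only its first vertex is in $\mathbf{A}$. $\text{Forb}(\mathbf{X},\mathbf{Y},\mathcal{G})$: all descendants of any $W\notin\mathbf{X}$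 on a proper directed path from $\mathbf{X}$ to $\mathbf{Y}$. Effect setup: fix $Y\in\mathcal{V}^s$, time $t$, interventions $X^1_{t-\gamma_1},\dots,X^n_{t-\gamma_n}$ (distinct vertices of $\mathcal{V}^f$) with $\gamma_i\ge0$ and $Y$ a descendant of every $X^i$ in $\mathcal{G}^s$. $\mathcal{X}^f=\{X^i_{t-\gamma_i}\}_i$. $\mathcal{CF}=\bigcup_{\mathcal{G}^f\in\mathcal{C}(\mathcal{G}^s)}\text{Forb}(\mathcal{X}^f,Y_t,\mathcal{G}^f)$, $\mathcal{NC}=\mathcal{CF}\setminus\mathcal{X}^f$, $t_{\mathcal{NC}}(F)=\min\{t_1:F_{t_1}\in\mathcal{NC}\}$ ($\min\emptyset=+\infty$). For $V_{t_v}\in\mathcal{V}^f$, $F_{t_1}\in\mathcal{V}^f\setminus\{V_{t_v}\}$ is $V_{t_v}$-$\mathcal{NC}$-accessible if some candidate FTCG contains a directed path from $F_{t_1}$ to $V_{t_v}$ all of whose vertices except possibly $V_{t_v}$ lie in $\mathcal{NC}$; $t^{\mathcal{NC}}_{V_{t_v}}(F)=\max\{t_1: F_{t_1}\text{ is }V_{t_v}\text{-}\mathcal{NC}\text{-accessible}\}$ ($\max\emptyset=-\infty$). *)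

From Stdlib Require Import ZArith ClassicalEpsilon.
From Stdlib Require List.
From mathcomp Require Import all_boot.
Set Implicit Arguments. Unset Strict Implicit. Unset Printing Implicit Defensive.

Inductive extZ := NegInf | Fin (z : Z) | PosInf.

Definition extZ_le (a b : extZ) : Prop :=
  match a, b with
  | NegInf, _ => True
  | _, PosInf => True
  | Fin x, Fin y => (x <= y)%Z
  | _, _ => False
  end.

(** min of a set of integers, with min ∅ = +oo
    (and -oo for a nonempty set without least element, i.e. its infimum). *)
Definition ext_min (P : Z -> Prop) : extZ :=
  match excluded_middle_informative
          (exists z, P z /\ forall w, P w -> (z <= w)%Z) with
  | left H => Fin (proj1_sig (constructive_indefinite_description _ H))
  | right _ => if excluded_middle_informative (exists z, P z)
               then NegInf else PosInf
  end.

(** max of a set of integers, with max ∅ = -oo (+oo if unbounded above). *)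
Definition ext_max (P : Z -> Prop) : extZ :=
  match excluded_middle_informative
          (exists z, P z /\ forall w, P w -> (w <= z)%Z) with
  | left H => Fin (proj1_sig (constructive_indefinite_description _ H))
  | right _ => if excluded_middle_informative (exists z, P z)
               then PosInf else NegInf
  end.

(** Directed walks: [chain E x l] says x :: l is a directed path in E. *)
Fixpoint chain {T : Type} (E : T -> T -> Prop) (x : T) (l : list T) : Prop :=
  match l with
  | nil => True
  | y :: l' => E x y /\ chain E y l'
  end.

(** b is a descendant of a (reflexive: every vertex is its own descendant). *)
Definition descendant {T : Type} (E : T -> T -> Prop) (a b : T) : Prop :=
  exists l, chain E a l /\ last a l = b.

Definition acyclic {T : Type} (E : T -> T -> Prop) : Prop :=
  forall x l, chain E x l -> l <> nil -> last x l <> x.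

(** Vertices of the full-time graph: X_s is (X, s). *)
Definition vtx (V : finType) := (V * Z)%type.

Definition is_FTCG (V : finType) (E : vtx V -> vtx V -> Prop) : Prop :=
  (forall X s W s', E (X, s) (W, s') -> (s <= s')%Z) /\ acyclic E.

Definition reduces (V : finType) (E : vtx V -> vtx V -> Prop)
  (Gs : V -> V -> Prop) : Prop :=
  forall X W : V, Gs X W <->
    exists (s g : Z), (0 <= g)%Z /\ E (X, (s - g)%Z) (W, s).

Definition is_SCG (V : finType) (Gs : V -> V -> Prop) : Prop :=
  exists E, is_FTCG E /\ reduces E Gs.

Definition candidate (V : finType) (Gs : V -> V -> Prop)
  (E : vtx V -> vtx V -> Prop) : Prop :=
  is_FTCG E /\ reduces E Gs.

Definition on_proper_path {T : Type} (E : T -> T -> Prop) (A : T -> Prop)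
  (b w : T) : Prop :=
  exists a l, A a /\ chain E a l /\ last a l = b /\
    (forall v, List.In v l -> ~ A v) /\ List.In w (a :: l).

Definition Forb {T : Type} (E : T -> T -> Prop) (A : T -> Prop) (b : T)
  : T -> Prop :=
  fun v => exists w, ~ A w /\ on_proper_path E A b w /\ descendant E w v.

Definition interv (V : finType) (n : nat) (Xv : 'I_n -> V) (gam : 'I_n -> nat)
  (t : Z) (i : 'I_n) : vtx V := (Xv i, (t - Z.of_nat (gam i))%Z).

Definition Xf (V : finType) (n : nat) (Xv : 'I_n -> V) (gam : 'I_n -> nat)
  (t : Z) : vtx V -> Prop :=
  fun v => exists i, v = interv Xv gam t i.

Definition CF (V : finType) (Gs : V -> V -> Prop) (n : nat) (Xv : 'I_n -> V)
  (gam : 'I_n -> nat) (Y : V) (t : Z) : vtx V -> Prop :=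
  fun v => exists E, candidate Gs E /\ Forb E (Xf Xv gam t) (Y, t) v.

Definition NC (V : finType) (Gs : V -> V -> Prop) (n : nat) (Xv : 'I_n -> V)
  (gam : 'I_n -> nat) (Y : V) (t : Z) : vtx V -> Prop :=
  fun v => CF Gs Xv gam Y t v /\ ~ Xf Xv gam t v.

Definition t_NC (V : finType) (Gs : V -> V -> Prop) (n : nat) (Xv : 'I_n -> V)
  (gam : 'I_n -> nat) (Y : V) (t : Z) (F : V) : extZ :=
  ext_min (fun t1 => NC Gs Xv gam Y t (F, t1)).

Definition NC_accessible (V : finType) (Gs : V -> V -> Prop) (n : nat)
  (Xv : 'I_n -> V) (gam : 'I_n -> nat) (Y : V) (t : Z)
  (target f : vtx V) : Prop :=
  f <> target /\
  exists E, candidate Gs E /\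
    exists l, chain E f l /\ last f l = target /\
      (forall v, List.In v (f :: l) -> v <> target -> NC Gs Xv gam Y t v).

Definition t_acc (V : finType) (Gs : V -> V -> Prop) (n : nat)
  (Xv : 'I_n -> V) (gam : 'I_n -> nat) (Y : V) (t : Z)
  (target : vtx V) (F : V) : extZ :=
  ext_max (fun t1 => NC_accessible Gs Xv gam Y t target (F, t1)).

From Stdlib Require Import ZArith Zwf Lia Classical ClassicalEpsilon.
From mathcomp Require Import all_boot.

(* 1 => 2 is just t_NC(F) <= t_f <= t^NC(F) for each target.  For 2 => 1,
   every vertex of NC is a descendant of an intervention, so it lies after
   time t - max gamma_i; hence the times of F in NC, which are nonempty by 2,
   have a least element m.  An accessible F_{t1} has t1 >= m, and F_m becomes
   accessible to the same target by adding to the witnessing candidate FTCG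
   the edge F_m -> W_s parallel to the first edge F_{t1} -> W_s of the path:
   the new edge goes strictly forward in time (so no cycle appears) and
   projects onto an existing SCG edge, so the graph stays a candidate, while
   NC, a union over all candidates, does not change. *)

Set Implicit Arguments.
Unset Strict Implicit.

Local Open Scope Z_scope.

Section ExtendedBounds.

Variable P : Z -> Prop.

Lemma ext_min_le_Fin z : P z -> extZ_le (ext_min P) (Fin z).
Proof.
intros Hz; unfold ext_min.
destruct (excluded_middle_informative _) as [H|H].
- destruct (constructive_indefinite_description _ H) as [m [Pm Hm]]; simpl; auto.
- destruct (excluded_middle_informative _) as [Hex|Hno]; [exact I|].
  exfalso; apply Hno; eauto.
Qed.

Lemma Fin_le_ext_max z : P z -> extZ_le (Fin z) (ext_max P).
Proof.
intros Hz; unfold ext_max.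
destruct (excluded_middle_informative _) as [H|H].
- destruct (constructive_indefinite_description _ H) as [m [Pm Hm]]; simpl; auto.
- destruct (excluded_middle_informative _) as [Hex|Hno]; [exact I|].
  exfalso; apply Hno; eauto.
Qed.

Lemma ext_max_inhabited a :
  a <> NegInf -> extZ_le a (ext_max P) -> exists z, P z.
Proof.
intros Ha Hle; apply NNPP; intro Hno; unfold ext_max in Hle.
destruct (excluded_middle_informative _) as [[z [Hz Hzmax]]|Hnomax].
{ exact (Hno (ex_intro _ z Hz)). }
destruct (excluded_middle_informative _) as [Hex|Hnone]; [contradiction|].
destruct a; simpl in Hle; congruence.
Qed.

Lemma Z_bounded_below_has_min L :
  (forall w, P w -> L <= w) -> (exists z, P z) ->
  exists m, P m /\ forall w, P w -> m <= w.
Proof.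
intros HL [z Hz]; apply NNPP; intro Hno.
assert (Hempty : forall w, ~ P w).
{ intro w; induction w as [w IH] using (well_founded_ind (Zwf_well_founded L)).
  intro Hw; apply Hno; exists w; split; [exact Hw|].
  intros w' Hw'; destruct (Z_le_gt_dec w w') as [|Hlt]; [assumption|].
  exfalso; apply (IH w'); [split; [apply HL|lia]|]; assumption. }
exact (Hempty z Hz).
Qed.

Lemma ext_min_bounded_below L :
  (forall w, P w -> L <= w) -> ext_min P <> NegInf.
Proof.
intros HL; unfold ext_min.
destruct (excluded_middle_informative _) as [Hmin|Hno]; [discriminate|].
destruct (excluded_middle_informative _) as [Hex|Hnone]; [|discriminate].
exfalso; exact (Hno (Z_bounded_below_has_min HL Hex)).
Qed.

End ExtendedBounds.

Lemma extZ_le_trans_Fin a z b :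
  extZ_le a (Fin z) -> extZ_le (Fin z) b -> extZ_le a b.
Proof. destruct a, b; simpl; intros; solve [tauto | lia]. Qed.

Section Chains.

Variable T : Type.

Lemma last_In (x : T) l : List.In (last x l) (x :: l).
Proof.
revert x; induction l as [|y l IH]; intros x; [left; reflexivity|right; apply IH].
Qed.

Lemma chain_sub (E E' : T -> T -> Prop) x l :
  (forall u v, E u v -> E' u v) -> chain E x l -> chain E' x l.
Proof.
intros HE; revert x; induction l as [|y l IH]; simpl; auto.
intros x [Hxy Hc]; auto.
Qed.

Lemma chain_monotone (E : T -> T -> Prop) (f : T -> Z) x l :
  (forall u v, E u v -> f u <= f v) -> chain E x l ->
  forall w, List.In w (x :: l) -> f x <= f w.
Proof.
intros Hf; revert x; induction l as [|y l IH]; simpl; intros x Hc w Hw.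
- destruct Hw as [<-|[]]; lia.
- destruct Hc as [Hxy Hc]; destruct Hw as [<-|Hw]; [lia|].
  specialize (IH y Hc w Hw); specialize (Hf _ _ Hxy); lia.
Qed.

Lemma acyclic_union_increasing (E R : T -> T -> Prop) (f : T -> Z) :
  (forall u v, E u v -> f u <= f v) -> (forall u v, R u v -> f u < f v) ->
  acyclic E -> acyclic (fun u v => E u v \/ R u v).
Proof.
intros HE HR Hacyc.
assert (Hmono : forall u v, E u v \/ R u v -> f u <= f v).
{ intros u v [H|H]; [apply HE|apply Z.lt_le_incl, HR]; exact H. }
assert (Hsplit : forall x l, chain (fun u v => E u v \/ R u v) x l ->
                   chain E x l \/ f x < f (last x l)).
{ intros x l; revert x; induction l as [|y l IH]; simpl; intros x Hc; [left; exact I|].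
  destruct Hc as [Hxy Hc].
  pose proof (chain_monotone Hmono Hc (last_In y l)) as Hyl.
  destruct Hxy as [Hxy|Hxy].
  - destruct (IH y Hc) as [H|H]; [left; split; assumption|right].
    specialize (HE _ _ Hxy); lia.
  - right; specialize (HR _ _ Hxy); lia. }
intros x l Hc Hnil Hlast.
destruct (Hsplit x l Hc) as [H|H].
- exact (Hacyc x l H Hnil Hlast).
- rewrite Hlast in H; lia.
Qed.

End Chains.

Definition add_edge {T : Type} (E : T -> T -> Prop) (a b : T) : T -> T -> Prop :=
  fun u v => E u v \/ (u = a /\ v = b).

Lemma FTCG_time_mono (V : finType) (E : vtx V -> vtx V -> Prop) u v :
  is_FTCG E -> E u v -> u.2 <= v.2.
Proof. destruct u, v; intros [Htime _]; eapply Htime. Qed.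

Lemma candidate_add_edge (V : finType) (Gs : V -> V -> Prop)
  (E : vtx V -> vtx V -> Prop) (a b : vtx V) :
  candidate Gs E -> Gs a.1 b.1 -> a.2 < b.2 -> candidate Gs (add_edge E a b).
Proof.
intros [HE Hred] Hab Htime; split; [split|].
- intros X s W s' [H|[Ha Hb]]; [eapply HE; exact H|].
  subst a b; simpl in Htime; lia.
- apply (acyclic_union_increasing (R := fun u v => u = a /\ v = b) (f := snd)).
  + intros u v; apply FTCG_time_mono, HE.
  + intros u v [-> ->]; exact Htime.
  + apply HE.
- intros X W; split.
  + intros HXW; destruct (proj1 (Hred X W) HXW) as [s [g [Hg H]]].
    exists s, g; split; [|left]; assumption.
  + intros [s [g [Hg [H|[Ha Hb]]]]]; [apply Hred; exists s, g; auto|].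
    subst a b; exact Hab.
Qed.

Section Accessibility.

Variables (V : finType) (Gs : V -> V -> Prop) (n : nat) (Xv : 'I_n -> V)
  (gam : 'I_n -> nat) (Y : V) (t : Z).

Lemma NC_time_lower_bound v :
  NC Gs Xv gam Y t v -> t - Z.of_nat (\max_(j < n) gam j) <= v.2.
Proof.
intros [[E [HE [w [_ [Hpath [l2 [Hc2 Hl2]]]]]]] _].
destruct Hpath as [a [l [[j ->] [Hc [_ [_ Hw]]]]]].
pose proof (chain_monotone (fun u v => FTCG_time_mono (proj1 HE)) Hc Hw) as Haw.
pose proof (chain_monotone (fun u v => FTCG_time_mono (proj1 HE)) Hc2 (last_In w l2))
  as Hwv.
assert (Hj : (gam j <= \max_(k < n) gam k)%coq_nat)
  by exact (elimT leP (leq_bigmax (F := gam) j)).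
rewrite Hl2 in Hwv; unfold interv in Haw; simpl in Haw, Hwv; lia.
Qed.

Lemma NC_accessible_NC T f :
  NC_accessible Gs Xv gam Y t T f -> NC Gs Xv gam Y t f.
Proof.
intros [Hne [_ [_ [l [_ [_ Hnc]]]]]]; apply Hnc; [left; reflexivity|exact Hne].
Qed.

Lemma NC_accessible_earlier T F t1 m :
  NC_accessible Gs Xv gam Y t T (F, t1) -> m <= t1 ->
  NC Gs Xv gam Y t (F, m) -> NC_accessible Gs Xv gam Y t T (F, m).
Proof.
intros Hacc Hm HF.
destruct (Z.eq_dec m t1) as [->|Hne]; [exact Hacc|].
destruct Hacc as [HneT [E [HE [l [Hc [Hl Hnc]]]]]].
destruct l as [|[W s] l]; [contradiction|].
destruct Hc as [Hfirst Hc]; simpl in Hl.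
assert (Hts : t1 <= s) by exact (FTCG_time_mono (proj1 HE) Hfirst).
assert (HsT : s <= T.2).
{ rewrite <- Hl.
  exact (chain_monotone (fun u v => FTCG_time_mono (proj1 HE)) Hc (last_In _ l)). }
split; [intros HmT; rewrite <- HmT in HsT; simpl in HsT; lia|].
exists (add_edge E (F, m) (W, s)); split.
- apply candidate_add_edge; [exact HE| |simpl; lia].
  apply (proj2 HE); exists s, (s - t1); split; [lia|].
  replace (s - (s - t1)) with t1 by lia; exact Hfirst.
- exists ((W, s) :: l); split; [|split; [exact Hl|]].
  + split; [right; auto|].
    apply (chain_sub (E := E)); [intros u v H; left; exact H|exact Hc].
  + intros v [<-|Hv] HvT; [exact HF|].
    apply Hnc; [right|]; assumption.
Qed.

End Accessibility.

Theorem corollary1 (V : finType) (Gs : V -> V -> Prop) (Y : V) (t : Z)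
  (n : nat) (Xv : 'I_n -> V) (gam : 'I_n -> nat)
  (hSCG : is_SCG Gs)
  (hdistinct : injective (interv Xv gam t))
  (hdesc : forall i, descendant Gs (Xv i) Y)
  (F : V) (i : 'I_n) :
  (exists tf : Z,
      NC_accessible Gs Xv gam Y t (interv Xv gam t i) (F, tf) /\
      NC_accessible Gs Xv gam Y t (Y, t) (F, tf))
  <->
  (extZ_le (t_NC Gs Xv gam Y t F) (t_acc Gs Xv gam Y t (interv Xv gam t i) F) /\
   extZ_le (t_NC Gs Xv gam Y t F) (t_acc Gs Xv gam Y t (Y, t) F)).
Proof.
split.
- intros [tf [HX HY]].
  pose proof (ext_min_le_Fin (P := fun t1 => NC Gs Xv gam Y t (F, t1))
                (NC_accessible_NC HX)) as Hmin.
  split; eapply extZ_le_trans_Fin; try exact Hmin; apply Fin_le_ext_max; assumption.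
- intros [HX HY].
  assert (Hbound : forall w, NC Gs Xv gam Y t (F, w) ->
                     t - Z.of_nat (\max_(j < n) gam j) <= w).
  { intros w Hw; exact (NC_time_lower_bound Hw). }
  pose proof (ext_min_bounded_below Hbound) as Hfin.
  destruct (ext_max_inhabited Hfin HX) as [t1 H1].
  destruct (ext_max_inhabited Hfin HY) as [t2 H2].
  destruct (Z_bounded_below_has_min Hbound (ex_intro _ t1 (NC_accessible_NC H1)))
    as [m [Hm Hleast]].
  exists m; split; eapply NC_accessible_earlier; eauto using NC_accessible_NC.
Qed.
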